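(* Let $\alpha\in\mathcal{O}_K$ be such that $\alpha^2$ is (additively) indecomposable. Then there is $j\geq-1$ such that $\alpha\in\{\pm\alpha_j,\pm\alpha_j'\}$.
   Context: $D>1$ squarefree, $K=\mathbb{Q}(\sqrt D)$, $\mathcal{O}_K$ its ring of integers, $\alpha'$ the conjugate. A totally positive $\beta\in\mathcal{O}_K$ (i.e. $\beta>0,\beta'>0$) is indecomposable if it cannot be written as $\beta=\gamma+\delta$ with $\gamma,\delta\in\mathcal{O}_K$ totally positive. $\omega_D=\sqrt D$ if $D\equiv2,3\pmod4$, $\omega_D=\frac{1+\sqrt D}2$ if $D\equiv1\pmod4$, with continued fraction $[u_0;u_1,u_2,\dots]$; $p_{-1}=1,q_{-1}=0,p_0=u_0,q_0=1$, $p_{i+1}=u_{i+1}p_i+p_{i-1}$, $q_{i+1}=u_{i+1}q_i+q_{i-1}$, and $\alpha_j=p_j-q_j\omega_D'$. *)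

From Stdlib Require Import Reals ZArith.
Open Scope R_scope.

Definition squarefree (D : Z) : Prop :=
  forall k : Z, (k * k | D)%Z -> k = 1%Z \/ k = (-1)%Z.

Definition is1mod4 (D : Z) : bool := Z.eqb (Z.modulo D 4) 1.

Definition omega (D : Z) : R :=
  if is1mod4 D then (1 + sqrt (IZR D)) / 2 else sqrt (IZR D).
Definition omega' (D : Z) : R :=
  if is1mod4 D then (1 - sqrt (IZR D)) / 2 else - sqrt (IZR D).

(* O_K = Z[omega_D]; an element a + b*omega_D is represented by (a, b). *)
Definition OK := (Z * Z)%type.

Definition emb (D : Z) (x : OK) : R := IZR (fst x) + IZR (snd x) * omega D.
Definition emb' (D : Z) (x : OK) : R := IZR (fst x) + IZR (snd x) * omega' D.

Definition addOK (x y : OK) : OK := (fst x + fst y, snd x + snd y)%Z.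
Definition oppOK (x : OK) : OK := (- fst x, - snd x)%Z.

(* omega^2 = t*omega + n with (t,n) = (1,(D-1)/4) if D = 1 mod 4, else (0,D). *)
Definition omega_t (D : Z) : Z := if is1mod4 D then 1%Z else 0%Z.
Definition omega_n (D : Z) : Z := if is1mod4 D then ((D - 1) / 4)%Z else D.

Definition mulOK (D : Z) (x y : OK) : OK :=
  let (a, b) := x in let (c, d) := y in
  (a * c + b * d * omega_n D, a * d + b * c + b * d * omega_t D)%Z.

(* Galois conjugation on coordinates: omega' = 1 - omega (D = 1 mod 4),
   omega' = - omega otherwise. *)
Definition conjOK (D : Z) (x : OK) : OK :=
  if is1mod4 D then (fst x + snd x, - snd x)%Z else (fst x, - snd x)%Z.

Definition totally_positive (D : Z) (b : OK) : Prop :=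
  0 < emb D b /\ 0 < emb' D b.

Definition indecomposable (D : Z) (b : OK) : Prop :=
  totally_positive D b /\
  ~ (exists g d : OK, totally_positive D g /\ totally_positive D d /\
                      b = addOK g d).

Fixpoint cf_x (D : Z) (i : nat) : R :=
  match i with
  | O => omega D
  | S i' => / (cf_x D i' - IZR (Int_part (cf_x D i')))
  end.
Definition cf_u (D : Z) (i : nat) : Z := Int_part (cf_x D i).

(* Convergents with shifted index: pP D n = p_{n-1}, qQ D n = q_{n-1},
   so pP D 0 = p_{-1} = 1, qQ D 0 = q_{-1} = 0, pP D 1 = p_0 = u_0, qQ D 1 = 1. *)
Fixpoint pq (D : Z) (n : nat) : Z * Z * (Z * Z) :=
  (* returns ((p_{n-1}, q_{n-1}), (p_n, q_n)) *)
  match n with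
  | O => ((1%Z, 0%Z), (cf_u D 0, 1%Z))
  | S n' =>
      let '((_, _), (p, q)) := pq D n' in
      let '((pm, qm), _) := pq D n' in
      ((p, q), (cf_u D n * p + pm, cf_u D n * q + qm)%Z)
  end.
Definition pP (D : Z) (n : nat) : Z := fst (fst (pq D n)).
Definition qQ (D : Z) (n : nat) : Z := snd (fst (pq D n)).

(* alpha_j = p_j - q_j * omega_D' as an element of O_K, with j = n - 1 >= -1. *)
Definition alphaJ (D : Z) (n : nat) : OK :=
  addOK (pP D n, 0%Z) (mulOK D ((- qQ D n)%Z, 0%Z) (conjOK D (0%Z, 1%Z))).

From Stdlib Require Import Reals ZArith Lia Lra.
Open Scope R_scope.

(** If alpha^2 is indecomposable, no mu in O_K with nonzero conjugates satisfies
    |mu| < |alpha| and |mu'| < |alpha'|: otherwise alpha^2 = mu^2 + (alpha^2 - mu^2) splits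
    into two totally positive summands.  Taking mu = 1 gives |alpha| <= 1 or |alpha'| <= 1, so
    up to sign and conjugation alpha = +-1 or alpha = P - Q omega with Q >= 1 and
    |P - Q omega| <= 1.  Writing (P, Q) in the basis formed by two consecutive convergents
    (p_K, q_K), (p_(K+1), q_(K+1)) with q_K <= Q < q_(K+1) shows that either (P, Q) is a
    convergent, or some convergent has p_j <= P, q_j <= Q and |p_j - q_j omega| < |P - Q omega|.
    Since omega' < 0, mu = p_j - q_j omega then lies in the forbidden box. *)

Lemma squarefree_mul_sqr_neq_sqr (D r s : Z) :
  (1 < D)%Z -> squarefree D -> s <> 0%Z -> (D * (s * s))%Z <> (r * r)%Z.
Proof.
  intros HD Hsf Hs E.
  set (g := Z.gcd r s).
  assert (Hg : g <> 0%Z) by (unfold g; rewrite Z.gcd_eq_0; lia).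
  destruct (Z.gcd_divide_l r s) as [r1 Hr].
  destruct (Z.gcd_divide_r r s) as [s1 Hs1].
  fold g in Hr, Hs1.
  assert (Hcop : Z.gcd r1 s1 = 1%Z).
  { pose proof (Z.gcd_div_gcd r s g Hg eq_refl) as H.
    rewrite Hr, Hs1, !Z.div_mul in H by exact Hg. exact H. }
  assert (E1 : (D * (s1 * s1) = r1 * r1)%Z).
  { apply (Z.mul_reg_r _ _ (g * g)); [nia|]. rewrite Hr, Hs1 in E. nia. }
  assert (Hs1_unit : (s1 | 1)%Z).
  { rewrite <- Hcop. apply Z.gcd_greatest; [|apply Z.divide_refl].
    apply (Z.gauss _ r1); [exists (D * s1)%Z; lia | now rewrite Z.gcd_comm]. }
  apply Z.divide_1_r in Hs1_unit.
  assert (ED : D = (r1 * r1)%Z) by (destruct Hs1_unit as [-> | ->]; lia).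
  destruct (Hsf r1) as [-> | ->]; [rewrite ED; apply Z.divide_refl | lia | lia].
Qed.

Lemma emb_addOK (D : Z) (x y : OK) : emb D (addOK x y) = emb D x + emb D y.
Proof. destruct x, y; unfold emb, addOK; simpl; rewrite !plus_IZR; ring. Qed.

Lemma emb'_addOK (D : Z) (x y : OK) : emb' D (addOK x y) = emb' D x + emb' D y.
Proof. destruct x, y; unfold emb', addOK; simpl; rewrite !plus_IZR; ring. Qed.

Lemma emb_oppOK (D : Z) (x : OK) : emb D (oppOK x) = - emb D x.
Proof. destruct x; unfold emb, oppOK; simpl; rewrite !opp_IZR; ring. Qed.

Lemma emb'_oppOK (D : Z) (x : OK) : emb' D (oppOK x) = - emb' D x.
Proof. destruct x; unfold emb', oppOK; simpl; rewrite !opp_IZR; ring. Qed.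

Lemma oppOK_involutive (x : OK) : oppOK (oppOK x) = x.
Proof. destruct x; unfold oppOK; simpl; f_equal; lia. Qed.

Lemma conjOK_involutive (D : Z) (x : OK) : conjOK D (conjOK D x) = x.
Proof. destruct x; unfold conjOK; destruct (is1mod4 D); simpl; f_equal; lia. Qed.

Lemma conjOK_oppOK (D : Z) (x : OK) : conjOK D (oppOK x) = oppOK (conjOK D x).
Proof. destruct x; unfold conjOK, oppOK; destruct (is1mod4 D); simpl; f_equal; lia. Qed.

Lemma conjOK_alphaJ (D : Z) (n : nat) : conjOK D (alphaJ D n) = (pP D n, - qQ D n)%Z.
Proof.
  unfold alphaJ, addOK, mulOK, conjOK.
  destruct (is1mod4 D); simpl; f_equal; ring.
Qed.

Section RealQuadraticField.

Variable D : Z.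
Hypothesis D_gt1 : (1 < D)%Z.

Lemma sqrt_D_gt1 : 1 < sqrt (IZR D).
Proof.
  rewrite <- sqrt_1. apply sqrt_lt_1_alt.
  split; [lra | apply IZR_lt; exact D_gt1].
Qed.

Lemma sqrt_D_sqr : sqrt (IZR D) * sqrt (IZR D) = IZR D.
Proof. apply sqrt_sqrt, IZR_le. lia. Qed.

Lemma omega_gt1 : 1 < omega D.
Proof. pose proof sqrt_D_gt1. unfold omega; destruct (is1mod4 D); lra. Qed.

Lemma omega'_lt0 : omega' D < 0.
Proof. pose proof sqrt_D_gt1. unfold omega'; destruct (is1mod4 D); lra. Qed.

Lemma omega'_eq : omega' D = IZR (omega_t D) - omega D.
Proof. unfold omega', omega, omega_t; destruct (is1mod4 D); lra. Qed.

Lemma omega_sqr : omega D * omega D = IZR (omega_n D) + IZR (omega_t D) * omega D.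
Proof.
  pose proof sqrt_D_sqr as Hsqr.
  unfold omega, omega_n, omega_t; destruct (is1mod4 D) eqn:E1; [|lra].
  apply Z.eqb_eq in E1.
  assert (E4 : (4 * ((D - 1) / 4) = D - 1)%Z) by (Z.div_mod_to_equations; lia).
  apply (f_equal IZR) in E4. rewrite mult_IZR, minus_IZR in E4.
  replace ((1 + sqrt (IZR D)) / 2 * ((1 + sqrt (IZR D)) / 2))
    with ((1 + 2 * sqrt (IZR D) + sqrt (IZR D) * sqrt (IZR D)) / 4) by field.
  rewrite Hsqr. lra.
Qed.

Lemma omega'_sqr : omega' D * omega' D = IZR (omega_n D) + IZR (omega_t D) * omega' D.
Proof. pose proof omega_sqr. rewrite omega'_eq. nra. Qed.

Lemma emb_mulOK (x y : OK) : emb D (mulOK D x y) = emb D x * emb D y.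
Proof.
  pose proof omega_sqr. destruct x as [a b], y as [c d].
  unfold emb, mulOK; simpl. rewrite !plus_IZR, !mult_IZR. nra.
Qed.

Lemma emb'_mulOK (x y : OK) : emb' D (mulOK D x y) = emb' D x * emb' D y.
Proof.
  pose proof omega'_sqr. destruct x as [a b], y as [c d].
  unfold emb', mulOK; simpl. rewrite !plus_IZR, !mult_IZR. nra.
Qed.

Lemma emb_conjOK (x : OK) : emb D (conjOK D x) = emb' D x.
Proof.
  pose proof omega'_eq. destruct x as [a b].
  unfold emb, emb', conjOK in *; unfold omega_t in *.
  destruct (is1mod4 D); simpl; rewrite ?plus_IZR, ?opp_IZR; nra.
Qed.

Lemma emb'_conjOK (x : OK) : emb' D (conjOK D x) = emb D x.
Proof. rewrite <- emb_conjOK, conjOK_involutive. reflexivity. Qed.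

Hypothesis D_sf : squarefree D.

Lemma omega_irrational (p q : Z) : q <> 0%Z -> IZR p - IZR q * omega D <> 0.
Proof.
  intros Hq E.
  pose proof sqrt_D_sqr as Hsqr.
  unfold omega in E; set (s := sqrt (IZR D)) in *.
  destruct (is1mod4 D).
  - apply (squarefree_mul_sqr_neq_sqr D (2 * p - q) q D_gt1 D_sf Hq).
    apply eq_IZR. rewrite !mult_IZR, minus_IZR, mult_IZR, <- Hsqr.
    replace (2 * IZR p - IZR q) with (IZR q * s) by lra. ring.
  - apply (squarefree_mul_sqr_neq_sqr D p q D_gt1 D_sf Hq).
    apply eq_IZR. rewrite !mult_IZR, <- Hsqr.
    replace (IZR p) with (IZR q * s) by lra. ring.
Qed.

End RealQuadraticField.

Lemma pP_0 (D : Z) : pP D 0 = 1%Z. Proof. reflexivity. Qed.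
Lemma qQ_0 (D : Z) : qQ D 0 = 0%Z. Proof. reflexivity. Qed.
Lemma pP_1 (D : Z) : pP D 1 = cf_u D 0. Proof. reflexivity. Qed.
Lemma qQ_1 (D : Z) : qQ D 1 = 1%Z. Proof. reflexivity. Qed.

Lemma pq_S (D : Z) (n : nat) :
  pq D (S n) = (snd (pq D n),
    (cf_u D (S n) * fst (snd (pq D n)) + fst (fst (pq D n)),
     cf_u D (S n) * snd (snd (pq D n)) + snd (fst (pq D n)))%Z).
Proof. simpl. destruct (pq D n) as [[a b] [c d]]. reflexivity. Qed.

Lemma pP_SS (D : Z) (n : nat) : pP D (S (S n)) = (cf_u D (S n) * pP D (S n) + pP D n)%Z.
Proof. unfold pP. rewrite (pq_S D (S n)), (pq_S D n). reflexivity. Qed.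

Lemma qQ_SS (D : Z) (n : nat) : qQ D (S (S n)) = (cf_u D (S n) * qQ D (S n) + qQ D n)%Z.
Proof. unfold qQ. rewrite (pq_S D (S n)), (pq_S D n). reflexivity. Qed.

Lemma Int_part_ge1 (x : R) : 1 <= x -> (1 <= Int_part x)%Z.
Proof.
  intros H. destruct (base_Int_part x) as [_ H2].
  assert (H0 : 0 < IZR (Int_part x)) by lra. apply lt_IZR in H0. lia.
Qed.

Lemma inv_frac_gt1 (x : R) : x - IZR (Int_part x) <> 0 -> 1 < / (x - IZR (Int_part x)).
Proof.
  intros Hx. destruct (base_Int_part x) as [H1 H2].
  rewrite <- Rinv_1. apply Rinv_lt_contravar; [|lra].
  assert (0 < x - IZR (Int_part x)) by lra. lra.
Qed.

Lemma Rabs_sub_opp_sign (a b : R) : a * b <= 0 -> Rabs (a - b) = Rabs a + Rabs b.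
Proof.
  intros Hab.
  destruct (Rle_lt_dec 0 a); destruct (Rle_lt_dec 0 b).
  - assert (a = 0 \/ b = 0) as [-> | ->] by nra;
      rewrite ?Rabs_R0, ?Rminus_0_l, ?Rminus_0_r, ?Rabs_Ropp; ring.
  - rewrite (Rabs_right a), (Rabs_left b), Rabs_right by lra. ring.
  - rewrite (Rabs_left a), (Rabs_right b), Rabs_left by lra. ring.
  - assert (0 < a * b) by nra. lra.
Qed.

Section ContinuedFraction.

Variable D : Z.
Hypothesis D_gt1 : (1 < D)%Z.
Hypothesis D_sf : squarefree D.

Definition cf_err (n : nat) : R := IZR (pP D n) - IZR (qQ D n) * omega D.

Lemma cf_err_SS n : cf_err (S (S n)) = IZR (cf_u D (S n)) * cf_err (S n) + cf_err n.
Proof. unfold cf_err. rewrite pP_SS, qQ_SS, !plus_IZR, !mult_IZR. ring. Qed.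

Lemma cf_err_0 : cf_err 0 = 1.
Proof. unfold cf_err. rewrite pP_0, qQ_0. ring. Qed.

Lemma cf_err_1 : cf_err 1 = IZR (cf_u D 0) - cf_x D 0.
Proof. unfold cf_err. rewrite pP_1, qQ_1. simpl. ring. Qed.

Lemma cf_err_neq0_of_qQ n : (1 <= qQ D n)%Z -> cf_err n <> 0.
Proof. intros Hq. apply omega_irrational; [exact D_gt1 | exact D_sf | lia]. Qed.

(* A joint induction: the complete quotient x_(n+1) is not an integer since otherwise
   cf_err (n+2) = 0, which irrationality of omega forbids once q >= 1; and q >= 1 needs
   the earlier complete quotients to exceed 1. *)
Lemma cf_invariant n :
  1 < cf_x D (S n) /\ cf_err n = - cf_x D (S n) * cf_err (S n) /\
  (1 <= qQ D (S n))%Z /\ (0 <= qQ D n)%Z.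
Proof.
  induction n as [|n [Hx [Herr [Hq1 Hq0]]]].
  - assert (Hne : cf_x D 0 - IZR (cf_u D 0) <> 0).
    { intro E. apply (cf_err_neq0_of_qQ 1); [rewrite qQ_1; lia|]. rewrite cf_err_1. lra. }
    split; [apply inv_frac_gt1; exact Hne|].
    split; [|rewrite qQ_1, qQ_0; lia].
    rewrite cf_err_0, cf_err_1. change (cf_x D 1) with (/ (cf_x D 0 - IZR (cf_u D 0))).
    field. exact Hne.
  - assert (Hu : (1 <= cf_u D (S n))%Z) by (apply Int_part_ge1; lra).
    assert (Hq2 : (1 <= qQ D (S (S n)))%Z) by (rewrite qQ_SS; nia).
    assert (Herr2 : cf_err (S (S n)) = - (cf_x D (S n) - IZR (cf_u D (S n))) * cf_err (S n)).
    { rewrite cf_err_SS, Herr. ring. }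
    assert (Hne : cf_x D (S n) - IZR (cf_u D (S n)) <> 0).
    { intro E. apply (cf_err_neq0_of_qQ (S (S n)) Hq2). rewrite Herr2, E. ring. }
    split; [apply inv_frac_gt1; exact Hne|].
    split; [|lia].
    change (cf_x D (S (S n))) with (/ (cf_x D (S n) - IZR (cf_u D (S n)))).
    rewrite Herr2. field. exact Hne.
Qed.

Lemma cf_x_gt1 n : 1 < cf_x D (S n).
Proof. apply cf_invariant. Qed.

Lemma cf_err_rec n : cf_err n = - cf_x D (S n) * cf_err (S n).
Proof. apply cf_invariant. Qed.

Lemma qQ_pos n : (1 <= qQ D (S n))%Z.
Proof. apply cf_invariant. Qed.

Lemma qQ_nonneg n : (0 <= qQ D n)%Z.
Proof. apply cf_invariant. Qed.

Lemma cf_u_pos n : (1 <= cf_u D n)%Z.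
Proof.
  apply Int_part_ge1. destruct n as [|n].
  - pose proof (omega_gt1 D D_gt1). simpl. lra.
  - pose proof (cf_x_gt1 n). lra.
Qed.

Lemma pP_pos n : (1 <= pP D n)%Z.
Proof.
  enough (H : (1 <= pP D n)%Z /\ (1 <= pP D (S n))%Z) by apply H.
  induction n as [|n [IH1 IH2]].
  - rewrite pP_0, pP_1. split; [lia|]. apply (cf_u_pos 0).
  - split; [exact IH2|]. rewrite pP_SS. pose proof (cf_u_pos (S n)). nia.
Qed.

Lemma qQ_le_S n : (qQ D n <= qQ D (S n))%Z.
Proof.
  destruct n as [|n]; [rewrite qQ_0, qQ_1; lia|].
  rewrite qQ_SS. pose proof (cf_u_pos (S n)). pose proof (qQ_pos n).
  pose proof (qQ_nonneg n). nia.
Qed.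

Lemma qQ_S_ge n : (Z.of_nat n <= qQ D (S n))%Z.
Proof.
  enough (H : (Z.of_nat n <= qQ D (S n))%Z /\ (Z.of_nat (S n) <= qQ D (S (S n)))%Z) by apply H.
  induction n as [|n [IH1 IH2]].
  - split; [rewrite qQ_1; lia|]. apply (qQ_pos 1).
  - split; [exact IH2|]. rewrite qQ_SS. pose proof (cf_u_pos (S (S n))).
    pose proof (qQ_pos n). pose proof (qQ_pos (S n)). nia.
Qed.

Lemma qQ_SS_eq1 n : qQ D (S (S n)) = 1%Z -> n = 0%nat /\ cf_u D 1 = 1%Z.
Proof.
  rewrite qQ_SS. intros E.
  pose proof (cf_u_pos (S n)). pose proof (qQ_pos n). pose proof (qQ_nonneg n).
  destruct n as [|n]; [rewrite qQ_1, qQ_0 in *; lia|]. pose proof (qQ_pos n). nia.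
Qed.

Lemma cf_det n : Z.abs (pP D (S n) * qQ D n - pP D n * qQ D (S n)) = 1%Z.
Proof.
  induction n as [|n IH]; [rewrite pP_0, qQ_0, qQ_1; lia|].
  rewrite pP_SS, qQ_SS. rewrite <- IH. rewrite <- Z.abs_opp. f_equal. ring.
Qed.

Lemma cf_err_neq0 n : cf_err n <> 0.
Proof.
  destruct n as [|n]; [rewrite cf_err_0; lra|].
  apply cf_err_neq0_of_qQ, qQ_pos.
Qed.

Lemma cf_err_alternate n : cf_err n * cf_err (S n) < 0.
Proof.
  rewrite cf_err_rec. pose proof (cf_x_gt1 n). pose proof (cf_err_neq0 (S n)).
  assert (0 < cf_err (S n) * cf_err (S n)) by (apply Rsqr_pos_lt; assumption).
  nra.
Qed.

Lemma cf_err_abs_lt n : Rabs (cf_err (S n)) < Rabs (cf_err n).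
Proof.
  rewrite (cf_err_rec n), Rabs_mult, Rabs_Ropp.
  pose proof (cf_x_gt1 n). pose proof (Rabs_pos_lt _ (cf_err_neq0 (S n))).
  rewrite (Rabs_right (cf_x D (S n))) by lra. nra.
Qed.

Lemma cf_err_abs_lt1 n : Rabs (cf_err (S n)) < 1.
Proof.
  induction n as [|n IH].
  - rewrite <- Rabs_R1, <- cf_err_0. apply cf_err_abs_lt.
  - pose proof (cf_err_abs_lt (S n)). lra.
Qed.

Lemma cf_err_1_neg : cf_err 1 < 0.
Proof.
  pose proof (cf_err_neq0 1). rewrite cf_err_1 in *.
  destruct (base_Int_part (cf_x D 0)). unfold cf_u in *. lra.
Qed.

Lemma cf_err_abs_combination n :
  IZR (qQ D (S n)) * Rabs (cf_err n) + IZR (qQ D n) * Rabs (cf_err (S n)) = 1.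
Proof.
  pose proof (IZR_le _ _ (qQ_nonneg n)) as Hq0.
  pose proof (IZR_le _ _ (qQ_nonneg (S n))) as Hq1.
  rewrite <- (Rabs_right (IZR (qQ D (S n)))), <- (Rabs_right (IZR (qQ D n))) by lra.
  rewrite <- !Rabs_mult, <- Rabs_sub_opp_sign.
  - replace (IZR (qQ D (S n)) * cf_err n - IZR (qQ D n) * cf_err (S n))
      with (- IZR (pP D (S n) * qQ D n - pP D n * qQ D (S n)))
      by (unfold cf_err; rewrite minus_IZR, !mult_IZR; ring).
    rewrite Rabs_Ropp, Rabs_Zabs, cf_det. reflexivity.
  - pose proof (cf_err_alternate n).
    replace (IZR (qQ D (S n)) * cf_err n * (IZR (qQ D n) * cf_err (S n)))
      with (IZR (qQ D (S n)) * IZR (qQ D n) * (cf_err n * cf_err (S n))) by ring.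
    assert (0 <= IZR (qQ D (S n)) * IZR (qQ D n)) by (apply Rmult_le_pos; lra).
    nra.
Qed.

Lemma cf_err_sum_lt1 n :
  (1 < qQ D (S (S n)))%Z -> Rabs (cf_err (S n)) + Rabs (cf_err (S (S n))) < 1.
Proof.
  intros Hq. pose proof (cf_err_abs_combination (S n)) as E.
  pose proof (IZR_lt _ _ Hq). pose proof (IZR_le _ _ (qQ_pos n)).
  pose proof (Rabs_pos_lt _ (cf_err_neq0 (S n))). pose proof (Rabs_pos (cf_err (S (S n)))).
  nra.
Qed.

End ContinuedFraction.

Lemma Zle_of_IZR_sub_gt_m1 (a b : Z) : -1 < IZR (b - a) -> (a <= b)%Z.
Proof. intros H. apply lt_IZR in H. lia. Qed.

Lemma coeff_sign_cases (x y a b Q : Z) :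
  (1 <= a <= b)%Z -> (1 <= Q < b)%Z -> Q = (x * a + y * b)%Z ->
  (1 <= x /\ y <= 0)%Z \/ (x <= -1 /\ 1 <= y)%Z.
Proof.
  intros Hab HQ EQ.
  destruct (Z_le_gt_dec y 0) as [Hy | Hy]; [left | right]; nia.
Qed.

Lemma Rabs_comb_same_sign (x y a b : R) :
  1 <= x -> y <= 0 -> a * b < 0 -> 1 < x \/ y < 0 ->
  Rabs a < Rabs (x * a + y * b) /\ Rabs (x * a + y * b - a) < Rabs (x * a + y * b).
Proof.
  intros Hx Hy Hab Hxy.
  destruct (Rlt_or_le 0 a) as [Ha | Ha].
  - assert (b < 0) by nra.
    assert (0 < (x - 1) * a + y * b) by (destruct Hxy; nra).
    rewrite Rabs_right, !Rabs_right by nra. lra.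
  - assert (a < 0) by (destruct (Rle_lt_or_eq _ _ Ha); [lra | subst; lra]).
    assert (0 < b) by nra.
    assert ((x - 1) * a + y * b < 0) by (destruct Hxy; nra).
    rewrite Rabs_left, !Rabs_left by nra. lra.
Qed.

Lemma Rabs_comb_opp_sign (x y a b : R) :
  x <= -1 -> 1 <= y -> a * b < 0 ->
  Rabs a < Rabs (x * a + y * b) /\ (x * a + y * b) * a < 0.
Proof.
  intros Hx Hy Hab.
  destruct (Rlt_or_le 0 a) as [Ha | Ha].
  - assert (b < 0) by nra. assert (x * a + y * b < - a) by nra.
    rewrite Rabs_right, Rabs_left by lra. split; nra.
  - assert (a < 0) by (destruct (Rle_lt_or_eq _ _ Ha); [lra | subst; lra]).
    assert (0 < b) by nra. assert (- a < x * a + y * b) by nra.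
    rewrite Rabs_left, Rabs_right by lra. split; nra.
Qed.

Section BestApproximation.

Variable D : Z.
Hypothesis D_gt1 : (1 < D)%Z.
Hypothesis D_sf : squarefree D.

Definition better_convergent (P Q : Z) (n : nat) : Prop :=
  (pP D n <= P)%Z /\ (qQ D n <= Q)%Z /\
  Rabs (cf_err D n) < Rabs (IZR P - IZR Q * omega D).

Lemma qQ_bracket (Q : Z) : (1 <= Q)%Z ->
  exists K, (1 <= K)%nat /\ (qQ D K <= Q < qQ D (S K))%Z.
Proof.
  intros HQ.
  assert (H : forall n, (exists K, (1 <= K)%nat /\ (qQ D K <= Q < qQ D (S K))%Z) \/
                        (qQ D (S n) <= Q)%Z).
  { induction n as [|n [IH | IH]].
    - right. rewrite qQ_1. exact HQ.
    - left. exact IH.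
    - destruct (Z_lt_le_dec Q (qQ D (S (S n)))); [left; exists (S n) | right]; lia. }
  destruct (H (S (Z.to_nat Q))) as [H1 | H1]; [exact H1|].
  pose proof (qQ_S_ge D D_gt1 D_sf (S (Z.to_nat Q))). lia.
Qed.

Lemma convergent_coords (K : nat) (P Q : Z) : exists x y : Z,
  P = (x * pP D K + y * pP D (S K))%Z /\ Q = (x * qQ D K + y * qQ D (S K))%Z.
Proof.
  set (s := (pP D (S K) * qQ D K - pP D K * qQ D (S K))%Z).
  assert (Hs : s = 1%Z \/ s = (-1)%Z) by (unfold s; pose proof (cf_det D K); lia).
  exists ((P * qQ D (S K) - pP D (S K) * Q) * - s)%Z, ((pP D K * Q - P * qQ D K) * - s)%Z.
  split; [transitivity (s * s * P)%Z | transitivity (s * s * Q)%Z];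
    solve [destruct Hs as [-> | ->]; ring | unfold s; ring].
Qed.

Lemma IZR_sub_pP (n : nat) (P Q : Z) :
  IZR (P - pP D n) = IZR P - IZR Q * omega D - cf_err D n + IZR (Q - qQ D n) * omega D.
Proof. unfold cf_err. rewrite !minus_IZR. ring. Qed.

(* The point (p_K - 1, q_K) is the one case where (p_K, q_K) itself is not a better
   approximation; the previous convergent is. *)
Lemma convergent_or_better_pP_sub1 (K : nat) : (1 <= K)%nat -> 0 < cf_err D K ->
  (exists n, (pP D K - 1 = pP D n)%Z /\ qQ D K = qQ D n) \/
  (exists n, better_convergent (pP D K - 1) (qQ D K) n).
Proof.
  intros HK Hpos.
  destruct K as [|[|m]]; [lia | pose proof (cf_err_1_neg D D_gt1 D_sf); lra |].
  destruct (Z.eq_dec (qQ D (S (S m))) 1) as [Hq | Hq].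
  - left. destruct (qQ_SS_eq1 D D_gt1 D_sf m Hq) as [-> Hu]. exists 1%nat.
    rewrite pP_SS, Hu, Hq, pP_0, pP_1, qQ_1. split; ring.
  - right. exists (S m). split; [|split].
    + rewrite pP_SS. pose proof (cf_u_pos D D_gt1 D_sf (S m)).
      pose proof (pP_pos D D_gt1 D_sf m). pose proof (pP_pos D D_gt1 D_sf (S m)). nia.
    + apply qQ_le_S; assumption.
    + replace (IZR (pP D (S (S m)) - 1) - IZR (qQ D (S (S m))) * omega D)
        with (cf_err D (S (S m)) - 1) by (unfold cf_err; rewrite minus_IZR; ring).
      pose proof (qQ_pos D D_gt1 D_sf (S m)).
      pose proof (cf_err_sum_lt1 D D_gt1 D_sf m ltac:(lia)) as Hsum.
      pose proof (cf_err_abs_lt1 D D_gt1 D_sf (S m)) as Hlt1.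
      rewrite (Rabs_right (cf_err D (S (S m)))) in Hsum, Hlt1 by lra.
      rewrite (Rabs_left (cf_err D (S (S m)) - 1)) by lra. lra.
Qed.

Lemma convergent_or_better_opp_sign (K : nat) (P Q : Z) :
  (1 <= K)%nat -> (qQ D K <= Q)%Z -> Rabs (IZR P - IZR Q * omega D) <= 1 ->
  Rabs (cf_err D K) < Rabs (IZR P - IZR Q * omega D) ->
  (IZR P - IZR Q * omega D) * cf_err D K < 0 ->
  (exists n, P = pP D n /\ Q = qQ D n) \/ (exists n, better_convergent P Q n).
Proof.
  intros HK HKQ He Hlt Hsign.
  pose proof (IZR_sub_pP K P Q) as EsubP.
  set (e := IZR P - IZR Q * omega D) in *.
  assert (Hsmall : Rabs (cf_err D K) < 1)
    by (destruct K as [|k]; [lia | apply cf_err_abs_lt1; assumption]).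
  pose proof (Rabs_def2 _ _ Hsmall) as [Ha1 Ha2].
  assert (He1 : -1 <= e) by (pose proof (Rle_abs (- e)); rewrite Rabs_Ropp in *; lra).
  pose proof (omega_gt1 D D_gt1) as Hw.
  assert (Hq : 0 <= IZR (Q - qQ D K)) by (apply IZR_le; lia).
  destruct (Rlt_or_le (cf_err D K) 0) as [Hneg | Hnn].
  - right. exists K. split; [apply Zle_of_IZR_sub_gt_m1; nra | split; [lia | exact Hlt]].
  - destruct (Z.eq_dec Q (qQ D K)) as [EQK | NQK].
    + assert (Ha : 0 < cf_err D K) by (destruct (Rle_lt_or_eq _ _ Hnn); [lra | subst; nra]).
      assert (EP : P = (pP D K - 1)%Z).
      { rewrite EQK, Z.sub_diag, Rmult_0_l, Rplus_0_r in EsubP.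
        assert (Hr : -2 < IZR (P - pP D K) < 0) by nra.
        destruct Hr as [Hr1 Hr2]. apply lt_IZR in Hr1, Hr2. lia. }
      rewrite EP, EQK.
      destruct (convergent_or_better_pP_sub1 K HK Ha) as [[n [E1 E2]] | [n Hn]];
        [left; exists n; lia | right; exists n; exact Hn].
    + right. exists K. split; [apply Zle_of_IZR_sub_gt_m1 | split; [lia | exact Hlt]].
      assert (1 <= IZR (Q - qQ D K)) by (apply IZR_le; lia).
      nra.
Qed.

Lemma convergent_or_better (P Q : Z) :
  (1 <= Q)%Z -> Rabs (IZR P - IZR Q * omega D) <= 1 ->
  (exists n, P = pP D n /\ Q = qQ D n) \/ (exists n, better_convergent P Q n).
Proof.
  intros HQ He.
  destruct (qQ_bracket Q HQ) as [K [HK [HKQ HQK]]].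
  destruct (convergent_coords K P Q) as [x [y [EP EQ]]].
  assert (Ee : IZR P - IZR Q * omega D = IZR x * cf_err D K + IZR y * cf_err D (S K))
    by (unfold cf_err; rewrite EP, EQ, !plus_IZR, !mult_IZR; ring).
  pose proof (IZR_sub_pP K P Q) as EsubP.
  set (e := IZR P - IZR Q * omega D) in *.
  pose proof (cf_err_alternate D D_gt1 D_sf K) as Halt.
  assert (HqK : (1 <= qQ D K)%Z) by (destruct K as [|k]; [lia | apply qQ_pos; assumption]).
  assert (Hw : 0 <= IZR (Q - qQ D K) * omega D).
  { pose proof (omega_gt1 D D_gt1). apply Rmult_le_pos; [apply IZR_le; lia | lra]. }
  destruct (coeff_sign_cases x y (qQ D K) (qQ D (S K)) Q) as [[Hx Hy] | [Hx Hy]];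
    [split; [exact HqK | apply qQ_le_S; assumption] | lia | exact EQ | |].
  - assert (Hxy : ((x = 1 /\ y = 0) \/ (1 < x \/ y < 0))%Z) by lia.
    destruct Hxy as [[-> ->] | Hxy]; [left; exists K; lia|].
    right. exists K.
    destruct (Rabs_comb_same_sign (IZR x) (IZR y) (cf_err D K) (cf_err D (S K))) as [Hlt Hdiff];
      [apply IZR_le; lia | apply IZR_le; lia | exact Halt
      | destruct Hxy; [left | right]; apply IZR_lt; lia |].
    rewrite <- Ee in Hlt, Hdiff.
    pose proof (Rle_abs (- (e - cf_err D K))). rewrite Rabs_Ropp in *.
    split; [apply Zle_of_IZR_sub_gt_m1; lra | split; [lia | exact Hlt]].
  - destruct (Rabs_comb_opp_sign (IZR x) (IZR y) (cf_err D K) (cf_err D (S K))) as [Hlt Hsign];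
      [apply IZR_le; lia | apply IZR_le; lia | exact Halt |].
    rewrite <- Ee in Hlt, Hsign.
    exact (convergent_or_better_opp_sign K P Q HK HKQ He Hlt Hsign).
Qed.

End BestApproximation.

Definition box_free (D : Z) (e e' : R) : Prop :=
  forall mu : OK, emb D mu <> 0 -> emb' D mu <> 0 ->
  Rabs (emb D mu) < e -> Rabs (emb' D mu) < e' -> False.

Lemma box_free_conj (D : Z) (e e' : R) : box_free D e e' -> box_free D e' e.
Proof.
  intros Hbox mu H1 H2 H3 H4.
  apply (Hbox (conjOK D mu)); rewrite ?emb_conjOK, ?emb'_conjOK; assumption.
Qed.

Lemma box_free_le1 (D : Z) (e e' : R) : box_free D e e' -> e <= 1 \/ e' <= 1.
Proof.
  intros Hbox.
  assert (E1 : emb D (1%Z, 0%Z) = 1) by (unfold emb; simpl; ring).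
  assert (E1' : emb' D (1%Z, 0%Z) = 1) by (unfold emb'; simpl; ring).
  destruct (Rle_lt_dec e 1); [left; assumption|].
  destruct (Rle_lt_dec e' 1); [right; assumption|].
  exfalso. apply (Hbox (1%Z, 0%Z)); rewrite ?E1, ?E1', ?Rabs_R1; lra.
Qed.

Section Indecomposable.

Variable D : Z.
Hypothesis D_gt1 : (1 < D)%Z.

Lemma indecomposable_sqr_box_free (alpha : OK) :
  indecomposable D (mulOK D alpha alpha) ->
  box_free D (Rabs (emb D alpha)) (Rabs (emb' D alpha)).
Proof.
  intros [_ Hdec] mu H1 H2 H3 H4. apply Hdec.
  exists (mulOK D mu mu), (addOK (mulOK D alpha alpha) (oppOK (mulOK D mu mu))).
  unfold totally_positive.
  rewrite emb_addOK, emb'_addOK, emb_oppOK, emb'_oppOK, !emb_mulOK, !emb'_mulOK by exact D_gt1.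
  pose proof (Rsqr_lt_abs_1 _ _ H3). pose proof (Rsqr_lt_abs_1 _ _ H4). unfold Rsqr in *.
  split; [split; apply Rsqr_pos_lt; assumption|].
  split; [split; lra|].
  destruct alpha, mu. unfold addOK, oppOK; simpl. f_equal; ring.
Qed.

Hypothesis D_sf : squarefree D.

Lemma box_free_eq_conj_alphaJ (beta : OK) :
  (snd beta < 0)%Z -> box_free D (Rabs (emb D beta)) (Rabs (emb' D beta)) ->
  Rabs (emb D beta) <= 1 -> exists n, beta = conjOK D (alphaJ D n).
Proof.
  destruct beta as [P b]; simpl snd. intros Hb Hbox Hsmall.
  set (Q := (- b)%Z).
  assert (E : emb D (P, b) = IZR P - IZR Q * omega D)
    by (unfold emb, Q; simpl; rewrite opp_IZR; ring).
  assert (E' : emb' D (P, b) = IZR P - IZR Q * omega' D)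
    by (unfold emb', Q; simpl; rewrite opp_IZR; ring).
  rewrite E, E' in Hbox. rewrite E in Hsmall.
  destruct (convergent_or_better D D_gt1 D_sf P Q) as [[n [EP EQ]] | [n [HPn [HQn Hlt]]]];
    [unfold Q; lia | exact Hsmall | |].
  - exists n. rewrite conjOK_alphaJ, <- EP, <- EQ. unfold Q. f_equal. lia.
  - exfalso.
    pose proof (omega'_lt0 D D_gt1) as Hw'.
    pose proof (IZR_le _ _ (pP_pos D D_gt1 D_sf n)) as Hp.
    pose proof (IZR_le _ _ (qQ_nonneg D D_gt1 D_sf n)) as Hq.
    assert (Hne : (pP D n < P)%Z \/ (qQ D n < Q)%Z).
    { destruct (Z.eq_dec (pP D n) P) as [<- | ]; [|lia].
      destruct (Z.eq_dec (qQ D n) Q) as [<- | ]; [|lia].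
      unfold cf_err in Hlt. lra. }
    assert (Hconj : IZR (pP D n) - IZR (qQ D n) * omega' D < IZR P - IZR Q * omega' D).
    { destruct Hne as [Hne | Hne]; apply IZR_lt in Hne;
        pose proof (IZR_le _ _ HPn); pose proof (IZR_le _ _ HQn); nra. }
    assert (Emu : emb D (pP D n, (- qQ D n)%Z) = cf_err D n)
      by (unfold emb, cf_err; simpl; rewrite opp_IZR; ring).
    assert (Emu' : emb' D (pP D n, (- qQ D n)%Z) = IZR (pP D n) - IZR (qQ D n) * omega' D)
      by (unfold emb'; simpl; rewrite opp_IZR; ring).
    apply (Hbox (pP D n, (- qQ D n)%Z)); rewrite ?Emu, ?Emu'.
    + apply cf_err_neq0; assumption.
    + nra.
    + exact Hlt.
    + rewrite !Rabs_right by nra. exact Hconj.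
Qed.

Lemma box_free_eq_pm_conj_alphaJ (beta : OK) :
  emb D beta <> 0 -> box_free D (Rabs (emb D beta)) (Rabs (emb' D beta)) ->
  Rabs (emb D beta) <= 1 ->
  exists n, beta = conjOK D (alphaJ D n) \/ beta = oppOK (conjOK D (alphaJ D n)).
Proof.
  intros Hnz Hbox Hsmall.
  destruct (Z_lt_le_dec (snd beta) 0) as [Hneg | Hnn].
  - destruct (box_free_eq_conj_alphaJ beta Hneg Hbox Hsmall) as [n E]. exists n. left. exact E.
  - destruct (Z.eq_dec (snd beta) 0) as [H0 | H0].
    + destruct beta as [a b]. simpl in H0. subst b.
      unfold emb in Hnz, Hsmall. simpl in Hnz, Hsmall.
      rewrite Rmult_0_l, Rplus_0_r in Hnz, Hsmall.
      exists 0%nat. rewrite conjOK_alphaJ, pP_0, qQ_0.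
      assert (Ha : (a = 1 \/ a = -1)%Z).
      { assert (a <> 0%Z) by (intros ->; apply Hnz; reflexivity).
        assert (Z.abs a <= 1)%Z by (apply le_IZR; rewrite abs_IZR; exact Hsmall). lia. }
      destruct Ha as [-> | ->]; [left | right]; reflexivity.
    + destruct (box_free_eq_conj_alphaJ (oppOK beta)) as [n E].
      * destruct beta; simpl in *; lia.
      * rewrite emb_oppOK, emb'_oppOK, !Rabs_Ropp. exact Hbox.
      * rewrite emb_oppOK, Rabs_Ropp. exact Hsmall.
      * exists n. right. rewrite <- E, oppOK_involutive. reflexivity.
Qed.

End Indecomposable.

Theorem lemma11 (D : Z) (HD : (1 < D)%Z) (Hsf : squarefree D) (alpha : OK) :
  indecomposable D (mulOK D alpha alpha) ->
  exists n : nat,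
    alpha = alphaJ D n \/ alpha = oppOK (alphaJ D n) \/
    alpha = conjOK D (alphaJ D n) \/ alpha = oppOK (conjOK D (alphaJ D n)).
Proof.
  intros Hind.
  pose proof (indecomposable_sqr_box_free D HD alpha Hind) as Hbox.
  destruct Hind as [[Hpos Hpos'] _].
  rewrite emb_mulOK in Hpos by exact HD. rewrite emb'_mulOK in Hpos' by exact HD.
  assert (Hnz : emb D alpha <> 0) by (intro E; rewrite E in Hpos; lra).
  assert (Hnz' : emb' D alpha <> 0) by (intro E; rewrite E in Hpos'; lra).
  destruct (box_free_le1 D _ _ Hbox) as [Hsmall | Hsmall'].
  - destruct (box_free_eq_pm_conj_alphaJ D HD Hsf alpha Hnz Hbox Hsmall) as [n E].
    exists n. tauto.
  - destruct (box_free_eq_pm_conj_alphaJ D HD Hsf (conjOK D alpha)) as [n [E | E]];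
      rewrite ?emb_conjOK, ?emb'_conjOK; try assumption.
    + apply box_free_conj. exact Hbox.
    + exists n. left. rewrite <- (conjOK_involutive D alpha), E, conjOK_involutive. reflexivity.
    + exists n. right. left.
      rewrite <- (conjOK_involutive D alpha), E, conjOK_oppOK, conjOK_involutive. reflexivity.
Qed.
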